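(* Let $\lambda$ be a nonzero real number. For all integers $m,n\ge0$, \[ \phi_{n+m,\lambda}(x)=\sum_{j=0}^{m}\sum_{k=0}^{n}{m\brace j}_\lambda\binom{n}{k}(j-m\lambda)_{n-k,\lambda}\,x^{j}\,\phi_{k,\lambda}(x) \] as polynomials in $x$; equivalently, the same identity holds with $x$ replaced by the boson creation operator $a^{+}$.
   Context: $(x)_{0,\lambda}=1$ and $(x)_{n,\lambda}=x(x-\lambda)\cdots(x-(n-1)\lambda)$ for $n\ge1$. The degenerate Stirling numbers of the second kind ${n\brace k}_\lambda$ are defined by $(x)_{n,\lambda}=\sum_{k=0}^{n}{n\brace k}_\lambda (x)_k$, with $(x)_k=x(x-1)\cdots(x-k+1)$. The degenerate Bell polynomials are $\phi_{n,\lambda}(x)=\sum_{k=0}^{n}{n\brace k}_\lambda x^{k}$ (equivalently $\sum_{n\ge0}\phi_{n,\lambda}(x)t^n/n!=e^{x((1+\lambda t)^{1/\lambda}-1)}$). *)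

From HB Require Import structures.
From mathcomp Require Import all_boot all_order all_algebra.
From mathcomp Require Import ring.
Set Implicit Arguments. Unset Strict Implicit. Unset Printing Implicit Defensive.
Import Order.TTheory GRing.Theory Num.Theory.
Local Open Scope ring_scope.

Definition dfall (R : nzRingType) (lam x : R) (n : nat) : R :=
  \prod_(i < n) (x - i%:R * lam).

Definition ffact (R : nzRingType) (x : R) (n : nat) : R :=
  \prod_(i < n) (x - i%:R).

(* Degenerate Stirling numbers of the second kind {n brace k}_lam, computed by
   the recurrence coming from (x)_{n+1,lam} = (x)_{n,lam} (x - n lam) and
   (x)_k (x - n lam) = (x)_{k+1} + (k - n lam) (x)_k.  The lemma
   [dfall_dstirling] below checks that they are exactly the coefficients in
   (x)_{n,lam} = sum_k {n brace k}_lam (x)_k, which is the paper's definition. *)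
Fixpoint dstirling (R : nzRingType) (lam : R) (n : nat) : nat -> R :=
  match n with
  | 0 => fun k => if k is 0 then 1 else 0
  | n'.+1 => fun k =>
      match k with
      | 0 => (0 - n'%:R * lam) * dstirling lam n' 0
      | k'.+1 => dstirling lam n' k' + (k'.+1%:R - n'%:R * lam) * dstirling lam n' k'.+1
      end
  end.

Definition dbell (R : nzRingType) (lam : R) (n : nat) : {poly R} :=
  \sum_(k < n.+1) dstirling lam n k *: 'X^k.

Lemma dstirling_gt (R : nzRingType) (lam : R) n k : (n < k)%N -> dstirling lam n k = 0.
Proof.
elim: n k => [|n IH] [|k] //= hk.
by rewrite !IH ?mulr0 ?addr0 // ltnW.
Qed.

Lemma dfall_dstirling (R : comNzRingType) (lam x : R) n :
  dfall lam x n = \sum_(k < n.+1) dstirling lam n k * ffact x k.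
Proof.
elim: n => [|n IH].
  by rewrite /dfall big_ord0 big_ord1 /ffact big_ord0 /= mulr1.
rewrite /dfall big_ord_recr /= -/(dfall lam x n) IH big_distrl /=.
have E k : ffact x k * (x - n%:R * lam) = ffact x k.+1 + (k%:R - n%:R * lam) * ffact x k.
  by rewrite /ffact big_ord_recr /=; ring.
under eq_bigr do rewrite -mulrA E mulrDr.
rewrite big_split /= [in RHS]big_ord_recl /=.
have HB : \sum_(i < n.+1) dstirling lam n i * ((i%:R - n%:R * lam) * ffact x i)
  = \sum_(i < n.+2) (i%:R - n%:R * lam) * dstirling lam n i * ffact x i.
  rewrite [in RHS]big_ord_recr /= dstirling_gt // mulr0 mul0r addr0.
  by apply: eq_bigr => i _; ring.
rewrite HB [\sum_(i < n.+2) _]big_ord_recl /=.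
rewrite /ffact big_ord0 !mulr1.
have -> : \sum_(i < n.+1) ((bump 0 i)%:R - n%:R * lam) * dstirling lam n (bump 0 i)
            * \prod_(i0 < bump 0 i) (x - i0%:R)
        = \sum_(i < n.+1) (i.+1%:R - n%:R * lam) * dstirling lam n i.+1
            * \prod_(i0 < i.+1) (x - i0%:R) by [].
have -> : \sum_(i < n.+1) dstirling lam n.+1 (bump 0 i) * \prod_(i0 < bump 0 i) (x - i0%:R)
        = \sum_(i < n.+1) (dstirling lam n i * \prod_(i0 < i.+1) (x - i0%:R)
           + (i.+1%:R - n%:R * lam) * dstirling lam n i.+1 * \prod_(i0 < i.+1) (x - i0%:R)).
  by apply: eq_bigr => i _; rewrite /bump /=; ring.
rewrite big_split /=; ring.
Qed.

From HB Require Import structures.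
From mathcomp Require Import all_boot all_order all_algebra.
From mathcomp Require Import ring.
Import Order.TTheory GRing.Theory Num.Theory.
Set Implicit Arguments. Unset Strict Implicit. Unset Printing Implicit Defensive.
Local Open Scope ring_scope.

(* The recurrence for the degenerate Stirling numbers says that
   phi_{n+1} = L_{n lam} phi_n for the first-order operator
   L_c p = X p + X p' - c p.  Since L_c (X^j p) = X^j L_{c-j} p, iterating from
   phi_m = sum_j {m brace j} X^j gives phi_{n+m} = sum_j {m brace j} X^j P_j,
   where P_j = L_{(n-1) lam - a} ... L_{-a} 1 with a = j - m lam.  Writing
   L_{k lam - a} = L_{k lam} + (a - k lam) shows by induction that
   P_j = sum_k C(n, k) (a)_{n-k,lam} phi_k, a binomial-type expansion. *)

Section DegenerateBellOperator.

Variable R : comNzRingType.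
Implicit Types (lam a c : R) (p : {poly R}).

Definition dbell_op c p : {poly R} := 'X * p + 'X * p^`() - c *: p.

Fact dbell_op_is_linear c : linear (dbell_op c).
Proof.
by move=> k p q; rewrite /dbell_op derivD derivZ scalerDr !scalerA -!mul_polyC; ring.
Qed.

HB.instance Definition _ c :=
  GRing.isLinear.Build R {poly R} {poly R} _ (dbell_op c) (dbell_op_is_linear c).

Lemma dbell_op_shift c c' p : dbell_op c p = dbell_op c' p + (c' - c) *: p.
Proof. by rewrite /dbell_op -!mul_polyC polyCB; ring. Qed.

Lemma mulX_derivXn k : 'X * ('X^k)^`() = k%:R *: 'X^k :> {poly R}.
Proof.
rewrite derivXn -mul_polyC polyC_natr.
by case: k => [|k]; rewrite ?mulr0n ?mulr0 ?mul0r // mulrnAr -exprS mulr_natl.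
Qed.

Lemma dbell_opXn c k : dbell_op c 'X^k = 'X^(k.+1) + (k%:R - c) *: 'X^k.
Proof. by rewrite /dbell_op mulX_derivXn exprS scalerBl; ring. Qed.

Lemma dbell_opMXn c j p : dbell_op c ('X^j * p) = 'X^j * dbell_op (c - j%:R) p.
Proof.
rewrite /dbell_op derivM mulrDr (mulrA 'X ('X^j)^`()) mulX_derivXn.
by rewrite -!mul_polyC polyCB; ring.
Qed.

Lemma dbellS lam n : dbell lam n.+1 = dbell_op (n%:R * lam) (dbell lam n).
Proof.
rewrite /dbell linear_sum /=.
under [RHS]eq_bigr do rewrite linearZ /= dbell_opXn scalerDr scalerA.
rewrite big_split /=.
have -> : \sum_(i < n.+1) (dstirling lam n i * (i%:R - n%:R * lam)) *: 'X^i
          = \sum_(i < n.+2) (dstirling lam n i * (i%:R - n%:R * lam)) *: 'X^i :> {poly R}.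
  by rewrite [RHS]big_ord_recr /= dstirling_gt // mul0r scale0r addr0.
rewrite big_ord_recl [X in _ = _ + X]big_ord_recl /= addrCA -big_split /=.
rewrite mulrC; congr (_ + _); apply: eq_bigr => i _.
by rewrite /bump /= add1n -scalerDl mulrC.
Qed.

Fixpoint dbell_shift lam a n : {poly R} :=
  if n is n'.+1 then dbell_op (n'%:R * lam - a) (dbell_shift lam a n') else 1.

Lemma dfallS lam a k : dfall lam a k.+1 = dfall lam a k * (a - k%:R * lam).
Proof. by rewrite /dfall big_ord_recr. Qed.

Lemma dbell_op_binomial_term lam a n (k : 'I_n.+1) :
  dbell_op (n%:R * lam - a) (dfall lam a (n - k) *: dbell lam k)
  = dfall lam a (n - k) *: dbell lam k.+1 + dfall lam a (n - k).+1 *: dbell lam k.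
Proof.
rewrite linearZ /= (dbell_op_shift _ (k%:R * lam)) -dbellS scalerDr scalerA.
by rewrite dfallS (natrB R (ltn_ord k)); congr (_ + _ *: _); ring.
Qed.

Lemma dbell_shift_expand lam a n :
  dbell_shift lam a n = \sum_(k < n.+1) ('C(n, k)%:R * dfall lam a (n - k)) *: dbell lam k.
Proof.
elim: n => [|n IH].
  by rewrite big_ord1 /dfall /dbell big_ord0 big_ord1 /= mulr1 !scale1r.
rewrite /= IH linear_sum /=.
under eq_bigr do rewrite -scalerA linearZ /= dbell_op_binomial_term scalerDr !scalerA.
rewrite big_split /= [in RHS]big_ord_recl.
under [in RHS]eq_bigr do rewrite lift0 subSS binS natrD mulrDl scalerDl.
rewrite big_split /= [in RHS]addrA [in LHS]addrC; congr (_ + _).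
rewrite [in LHS]big_ord_recl [in RHS]big_ord_recr /= (@bin_small n n.+1) //.
rewrite mul0r scale0r addr0.
rewrite !bin0 !subn0; congr (_ + _).
by apply: eq_bigr => i _; rewrite /bump /= add1n subnSK.
Qed.

Lemma dbell_addn lam m n :
  dbell lam (n + m) =
  \sum_(j < m.+1) dstirling lam m j *: ('X^j * dbell_shift lam (j%:R - m%:R * lam) n).
Proof.
elim: n => [|n IH]; first by apply: eq_bigr => j _; rewrite mulr1.
rewrite addSn dbellS IH linear_sum /=; apply: eq_bigr => j _.
rewrite linearZ /= dbell_opMXn natrD; congr (_ *: (_ * dbell_op _ _)); ring.
Qed.

End DegenerateBellOperator.

Theorem theorem2p5 (R : realFieldType) (lam : R) (hlam : lam != 0) (m n : nat) :
  dbell lam (n + m) =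
  \sum_(j < m.+1) \sum_(k < n.+1)
     (dstirling lam m j * 'C(n, k)%:R * dfall lam (j%:R - m%:R * lam) (n - k))
       *: ('X^j * dbell lam k).
Proof.
rewrite dbell_addn; apply: eq_bigr => j _.
rewrite dbell_shift_expand mulr_sumr scaler_sumr; apply: eq_bigr => k _.
by rewrite -scalerAr !scalerA mulrA.
Qed.
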